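(* Let ${\mathscr X}$ be a Hausdorff space, ${\mathscr A}$ a set of finite Borel partitions of ${\mathscr X}$ directed under refinement, and equip $M^1({\mathscr X})$ with the weak topology (assumed Hausdorff, with $P\mapsto P(A)$ Borel measurable for all Borel $A$). Let $\Pi$ be a Radon probability measure on $M^1({\mathscr X})$ (weak topology) with mean measure $G$. Then for every $\delta,\epsilon>0$ there exist $\alpha\in{\mathscr A}$ and $\eta>0$ such that for every Borel set $B$ with $\inf\{G(B\triangle C):C\in\sigma(\alpha)\}<\eta$, $$\Pi\Bigl(\bigl\{P\in M^1({\mathscr X}):\inf\{P(B\triangle C):C\in\sigma(\alpha)\}>\delta\bigr\}\Bigr)<\epsilon.$$
   Context: The weak topology on $M^1({\mathscr X})$ (Radon probability measures) is the coarsest topology making $P\mapsto\int h\,dP$ continuous for all bounded Borel $h$. Mean measure: $G(A)=\int P(A)\,d\Pi(P)$. $B\triangle C=(B\setminus C)\cup(C\setminus B)$; $\sigma(\alpha)$ is the $\sigma$-algebra generated by the partition $\alpha$. *)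

From HB Require Import structures.
From mathcomp Require Import all_boot all_order all_algebra.
From mathcomp Require Import all_classical all_reals all_analysis measurable_realfun.
Set Implicit Arguments.
Unset Strict Implicit.
Unset Printing Implicit Defensive.
Import Order.TTheory GRing.Theory Num.Theory.
Import numFieldNormedType.Exports.
Local Open Scope classical_set_scope.
Local Open Scope ring_scope.

Definition Borel (T : ptopologicalType) := g_sigma_algebraType (@open T).

(* Radon probability measure on the Borel sets of a Hausdorff space:
   inner regular by compact sets on every Borel set (local finiteness is
   automatic for a finite measure). *)
Definition radon (R : realType) (T : ptopologicalType)
  (P : probability (Borel T) R) : Prop :=
  forall A : set (Borel T), measurable A ->
    P A = ereal_sup [set P K | K in [set K : set T | compact K /\ K `<=` A]].

Lemma radon_dirac (R : realType) (T : ptopologicalType) (x : T) :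
  radon (\d_(x : Borel T) : probability (Borel T) R).
Proof.
move=> A mA; rewrite /= /dirac.
have Hle : (ereal_sup [set ((\1_K x)%:E : \bar R) | K in
    [set K : set T | compact K /\ K `<=` A]] <= (\1_A x)%:E)%E.
  apply: ub_ereal_sup => _ [K [_ KA] <-]; rewrite lee_fin.
  rewrite /indic; case: (boolP (x \in K)) => xK /=.
    by rewrite (mem_set (KA _ (set_mem xK))).
  by case: (x \in A).
apply/eqP; rewrite eq_le Hle andbT.
case: (boolP (x \in A)) => xA.
  apply: ereal_sup_ubound; exists [set x]; first split.
  - exact: compact_set1.
  - move=> y /= ->; exact: set_mem.
  by rewrite /indic xA (@mem_set _ [set x] x).
rewrite /indic (negbTE xA) /=.
apply: ereal_sup_ubound; exists set0; first split.
- exact: compact0.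
- by [].
by rewrite /indic in_set0.
Qed.

Definition M1 (R : realType) (X : ptopologicalType) :=
  {P : probability (Borel X) R | radon P}.

HB.instance Definition _ (R : realType) (X : ptopologicalType) :=
  gen_eqMixin (M1 R X).
HB.instance Definition _ (R : realType) (X : ptopologicalType) :=
  gen_choiceMixin (M1 R X).
HB.instance Definition _ (R : realType) (X : ptopologicalType) :=
  isPointed.Build (M1 R X) (exist _ _ (@radon_dirac R X point)).

Definition integ (R : realType) (X : ptopologicalType) (h : X -> R)
  (P : M1 R X) : R := (\int[sval P]_(x in [set: Borel X]) h x)%R.

Definition weak_index (R : realType) (X : ptopologicalType) :
  set ((X -> R) * set R) :=
  [set hU | measurable_fun [set: Borel X] (hU.1 : Borel X -> R) /\
            (exists M : R, forall x, `|hU.1 x| <= M) /\ open hU.2].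

Definition weak_subbase (R : realType) (X : ptopologicalType)
  (hU : (X -> R) * set R) : set (M1 R X) := integ hU.1 @^-1` hU.2.

(* M^1(X) with the weak topology: the coarsest topology making every
   P |-> \int h dP (h bounded Borel) continuous, i.e. the topology generated
   by the subbase of preimages of open sets under these maps. *)
Definition M1w (R : realType) (X : ptopologicalType) := M1 R X.
HB.instance Definition _ (R : realType) (X : ptopologicalType) :=
  Pointed.on (M1w R X).
HB.instance Definition _ (R : realType) (X : ptopologicalType) :=
  @isSubBaseTopological.Build (M1w R X) _ (@weak_index R X) (@weak_subbase R X).

Definition finite_borel_partition d (T : measurableType d)
  (alpha : set (set T)) : Prop :=
  [/\ finite_set alpha,
      (forall A, alpha A -> measurable A /\ A !=set0),
      (forall A B, alpha A -> alpha B -> A `&` B !=set0 -> A = B) &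
      \bigcup_(A in alpha) A = setT].

Definition refines T (gamma alpha : set (set T)) : Prop :=
  forall C, gamma C -> exists2 A, alpha A & C `<=` A.

Definition directed_by_refinement T (AA : set (set (set T))) : Prop :=
  AA !=set0 /\
  forall alpha beta, AA alpha -> AA beta ->
    exists2 gamma, AA gamma & refines gamma alpha /\ refines gamma beta.

Definition sigma_gen T (alpha : set (set T)) : set (set T) := <<s alpha >>.

Definition symdiff T (B C : set T) : set T := (B `\` C) `|` (C `\` B).

Definition mean_measure (R : realType) (X : ptopologicalType)
  (Pi : probability (Borel (M1w R X)) R) (A : set (Borel X)) : \bar R :=
  (\int[Pi]_(P in [set: Borel (M1w R X)]) (sval (P : M1 R X)) A)%E.

From HB Require Import structures.
From mathcomp Require Import all_boot all_order all_algebra.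
From mathcomp Require Import all_classical all_reals all_analysis measurable_realfun.
From mathcomp Require Import finmap.
Set Implicit Arguments.
Unset Strict Implicit.
Unset Printing Implicit Defensive.
Import Order.TTheory GRing.Theory Num.Theory.
Local Open Scope classical_set_scope.
Local Open Scope ring_scope.

(* Any alpha in AA works, with eta := delta * eps.  Take C0 in sigma(alpha)
   with G(B Δ C0) < eta.  The event {P | inf_C P(B Δ C) > delta} is contained
   in {P | P(B Δ C0) >= delta}, and G(B Δ C0) is the Pi-integral of
   P |-> P(B Δ C0), so by Markov's inequality the event has Pi-measure at most
   G(B Δ C0) / delta < eps.  The event is measurable because sigma(alpha) is
   finite, so the infimum is taken over finitely many measurable functions. *)

Section sigma_gen_partition.
Variables (T : Type) (alpha : set (set T)).
Hypothesis alpha_disj : forall A B, alpha A -> alpha B -> A `&` B !=set0 -> A = B.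
Hypothesis alpha_cover : \bigcup_(A in alpha) A = setT.

Let unions_of_blocks :=
  [set \bigcup_(A in F) A | F in [set F : set (set T) | F `<=` alpha]].

Let unions_of_blocks_sigma_algebra : sigma_algebra setT unions_of_blocks.
Proof.
split.
- by exists set0 => //; exact: bigcup_set0.
- move=> _ [F Fa <-]; exists (alpha `\` F); first by move=> A [].
  apply/seteqP; split => x.
  + move=> [A [aA nFA] Ax]; split => // -[A' FA' A'x].
    have AA' : A = A' by apply: alpha_disj => //; [exact: Fa | exists x].
    by apply: nFA; rewrite AA'.
  + move=> [_ nFx]; have : setT x by [].
    rewrite -alpha_cover => -[A aA Ax]; exists A => //; split => // FA.
    by apply: nFx; exists A.
- move=> G HG; pose F n := s2val (cid2 (HG n)).
  have Fa n : F n `<=` alpha := s2valP (cid2 (HG n)).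
  have FG n : \bigcup_(A in F n) A = G n := s2valP' (cid2 (HG n)).
  exists (\bigcup_n F n); first by move=> A [n _ /Fa].
  apply/seteqP; split => x.
  + by move=> [A [n _ FnA] Ax]; exists n => //; rewrite -FG; exists A.
  + by move=> [n _]; rewrite -FG => -[A FnA Ax]; exists A => //; exists n.
Qed.

Lemma sigma_gen_partition_finite :
  finite_set alpha -> finite_set (sigma_gen alpha).
Proof.
move=> alpha_fin.
have sub_unions : sigma_gen alpha `<=` unions_of_blocks.
  apply: smallest_sub; first exact: unions_of_blocks_sigma_algebra.
  by move=> A aA; exists [set A]; [move=> B -> | exact: bigcup_set1].
apply: (sub_finite_set sub_unions).
apply: (@sub_finite_set _ _ ((fun F : {fset set T} => \bigcup_(A in [set` F]) A)
   @` [set` fpowerset (fset_set alpha)])); last exact/finite_image/finite_fset.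
move=> _ [F Fa <-]; have Ffin : finite_set F := sub_finite_set Fa alpha_fin.
exists (fset_set F); last by rewrite fset_setK.
by rewrite /= fpowersetE -fset_set_sub.
Qed.

End sigma_gen_partition.

Lemma sigma_gen_measurable d (T : measurableType d) (alpha : set (set T)) :
  (forall A, alpha A -> measurable A) -> sigma_gen alpha `<=` measurable.
Proof.
by move=> alpha_meas; apply: smallest_sub => //; exact: sigma_algebra_measurable.
Qed.

Lemma measurable_lt_ereal_inf d (T : measurableType d) (R : realType)
    (I : Type) (F : set I) (f : I -> T -> \bar R) (a : R) :
  finite_set F -> (forall i, F i -> measurable_fun setT (f i)) ->
  measurable [set x | (a%:E < ereal_inf [set f i x | i in F])%E].
Proof.
move=> Ffin mf.
have -> : [set x | (a%:E < ereal_inf [set f i x | i in F])%E] =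
    \bigcup_n \bigcap_(i in F) [set x | ((a + n.+1%:R^-1)%:E <= f i x)%E].
  apply/seteqP; split => x /=.
  - move=> a_lt_inf.
    have [n an_le_inf] : exists n : nat,
        ((a + n.+1%:R^-1)%:E <= ereal_inf [set f i x | i in F])%E.
      move: a_lt_inf; case: (ereal_inf _) => [r| |] /=.
      + by rewrite lte_fin => /ltr_add_invr [n hn]; exists n; rewrite lee_fin ltW.
      + by exists 0%N; rewrite leey.
      + by rewrite ltNge leNye.
    exists n => // i Fi; apply: le_trans an_le_inf _.
    by apply: ereal_inf_lbound; exists i.
  - move=> [n _ an_le]; apply: (@lt_le_trans _ _ (a + n.+1%:R^-1)%:E).
      by rewrite lte_fin ltrDl invr_gt0.
    by apply: le_ereal_inf_tmp => _ [i Fi <-]; exact: an_le.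
apply: bigcupT_measurable => n; apply: fin_bigcap_measurable => // i Fi.
by rewrite -[X in measurable X]setTI; exact: emeasurable_fun_c_infty (mf i Fi) _.
Qed.

Lemma markov_ge0 d (T : measurableType d) (R : realType)
    (mu : {measure set T -> \bar R}) (g : T -> \bar R) (a : R) :
  measurable_fun setT g -> (forall x, 0 <= g x)%E -> 0 < a ->
  (a%:E * mu [set x | a%:E <= g x] <= \int[mu]_x g x)%E.
Proof.
move=> mg g0 a0.
have abs_g x : `|g x|%E = g x by rewrite gee0_abs.
have := le_integral_comp_abse mu measurableT (g:=g) (a:=a) (f:=id)
  (@measurable_id _ _ setT) (fun r h => h) (fun x y _ _ h => h) mg a0.
rewrite setTI; under eq_fun do rewrite abs_g.
by under eq_integral do rewrite abs_g.
Qed.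

Theorem mainTheorem5 (R : realType) (X : ptopologicalType)
  (AA : set (set (set (Borel X))))
  (hX : hausdorff_space X)
  (hAA : forall alpha, AA alpha -> finite_borel_partition alpha)
  (hdir : directed_by_refinement AA)
  (hW : hausdorff_space (M1w R X))
  (hmeas : forall A : set (Borel X), measurable A ->
     measurable_fun [set: Borel (M1w R X)]
       (fun P : Borel (M1w R X) => (sval (P : M1 R X)) A))
  (Pi : probability (Borel (M1w R X)) R) (hPi : radon Pi) :
  forall delta eps : R, 0 < delta -> 0 < eps ->
  exists2 alpha, AA alpha &
  exists2 eta : R, 0 < eta &
    forall B : set (Borel X), measurable B ->
      (ereal_inf [set mean_measure Pi (symdiff B C) | C in sigma_gen alpha]
         < eta%:E)%E ->
      (Pi [set P : Borel (M1w R X) |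
             (delta%:E < ereal_inf [set (sval (P : M1 R X)) (symdiff B C)
                                   | C in sigma_gen alpha])%E]
         < eps%:E)%E.
Proof.
move=> delta eps delta_gt0 eps_gt0.
have [[alpha AAalpha] _] := hdir.
have [alpha_fin alpha_meas alpha_disj alpha_cover] := hAA _ AAalpha.
exists alpha => //; exists (delta * eps); first exact: mulr_gt0.
move=> B mB /ereal_inf_lt [_ [C0 sC0 <-] G_C0_lt].
set P_symdiff := fun C (P : Borel (M1w R X)) => (sval (P : M1 R X)) (symdiff B C).
have mP_symdiff C : sigma_gen alpha C -> measurable_fun setT (P_symdiff C).
  move=> /(sigma_gen_measurable (fun A h => (alpha_meas A h).1)) mC.
  by apply: hmeas; apply: measurableU; apply: measurableD.
set S := [set P | _].
have mS : measurable S.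
  apply: measurable_lt_ereal_inf mP_symdiff.
  exact: sigma_gen_partition_finite alpha_disj alpha_cover alpha_fin.
have S_sub : S `<=` [set P | delta%:E <= P_symdiff C0 P]%E.
  by move=> P SP; apply/ltW/(lt_le_trans SP)/ereal_inf_lbound; exists C0.
have markov := markov_ge0 Pi (mP_symdiff C0 sC0) (fun P => measure_ge0 _ _)
  delta_gt0.
rewrite ltNge; apply/negP => Pi_S_ge.
suff : ((delta * eps)%:E < (delta * eps)%:E)%E by rewrite ltxx.
apply: le_lt_trans G_C0_lt; apply: le_trans markov.
rewrite EFinM; apply: lee_wpmul2l; first by rewrite lee_fin ltW.
apply: le_trans Pi_S_ge _; apply: le_measure S_sub; apply/mem_set => //.
by have := emeasurable_fun_c_infty measurableT (mP_symdiff C0 sC0) delta%:E;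
  rewrite setTI.
Qed.
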